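(* Let $\mathbf{q}^*\in\mathbb{S}^3$ be a fixed unit quaternion (the attractor) and consider the rotational dynamical system on unit quaternions $$\boldsymbol{\omega} = \mathbf{A}_o\, k_q(\mathbf{q},\mathbf{q}^* )\, \log(\mathbf{q}\otimes\bar{\mathbf{q}}^* ),$$ where $\boldsymbol{\omega}\in\mathbb{R}^3$ is the angular velocity driving $\mathbf{q}(t)$ through the quaternion propagation equation $\dot{\mathbf{q}} = \tfrac12 \tilde{\boldsymbol{\omega}}\otimes\mathbf{q}$ with $\tilde{\boldsymbol{\omega}}=[0,\boldsymbol{\omega}^\top]^\top$, and $\mathbf{A}_o\in\mathbb{R}^{3\times3}$. If $$\mathbf{A}_o=\mathbf{A}_o^\top\prec 0 \quad\text{and}\quad k_q(\mathbf{q},\mathbf{q}^* )=\frac{\|\mathrm{vec}(\mathbf{q}\otimes\bar{\mathbf{q}}^* )\|}{\arccos(\mathrm{scalar}(\mathbf{q}\otimes\bar{\mathbf{q}}^* ))},$$ then this dynamical system is globally asymptotically stable at the attractor $\mathbf{q}^*$, i.e. $\lim_{t\to\infty}\|\log(\mathbf{q}^*\otimes\bar{\mathbf{q}}(t))\|=0$.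
   Context: A unit quaternion is $\mathbf{q}=[s,\boldsymbol{u}^\top]^\top\in\mathbb{S}^3\subset\mathbb{R}^4$ with scalar part $\mathrm{scalar}(\mathbf{q})=s\in\mathbb{R}$ and vector part $\mathrm{vec}(\mathbf{q})=\boldsymbol{u}\in\mathbb{R}^3$. The conjugate is $\bar{\mathbf{q}}=[s,-\boldsymbol{u}^\top]^\top$. The quaternion product is $\mathbf{q}_1\otimes\mathbf{q}_2=[s_1s_2-\boldsymbol{u}_1^\top\boldsymbol{u}_2,\ (s_1\boldsymbol{u}_2+s_2\boldsymbol{u}_1+\mathbf{S}(\boldsymbol{u}_1)\boldsymbol{u}_2)^\top]^\top$, where $\mathbf{S}(\cdot)$ denotes the $3\times3$ skew-symmetric (cross-product) matrix. The quaternion logarithm $\log:\mathbb{S}^3\to\mathbb{R}^3$ is $\log([s,\boldsymbol{u}^\top]^\top)=\arccos(s)\,\boldsymbol{u}/\|\boldsymbol{u}\|$ if $\|\boldsymbol{u}\|>0$ and $[0,0,0]^\top$ otherwise. The propagation equation $\dot{\mathbf{q}}=\tfrac12\tilde{\boldsymbol{\omega}}\otimes\mathbf{q}$ reads $\dot s=-\tfrac12\boldsymbol{u}^\top\boldsymbol{\omega}$, $\dot{\boldsymbol{u}}=\tfrac12(s\mathbf{I}-\mathbf{S}(\boldsymbol{u}))\boldsymbol{\omega}$. *)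

From Stdlib Require Import Reals.
From Coquelicot Require Import Coquelicot.
Open Scope R_scope.

Record vec3 := mkV { vx : R; vy : R; vz : R }.

Definition vzero : vec3 := mkV 0 0 0.
Definition vadd (a b : vec3) : vec3 := mkV (vx a + vx b) (vy a + vy b) (vz a + vz b).
Definition vopp (a : vec3) : vec3 := mkV (- vx a) (- vy a) (- vz a).
Definition vscale (c : R) (a : vec3) : vec3 := mkV (c * vx a) (c * vy a) (c * vz a).
Definition vdot (a b : vec3) : R := vx a * vx b + vy a * vy b + vz a * vz b.
Definition vnorm (a : vec3) : R := sqrt (vdot a a).
Definition vcross (a b : vec3) : vec3 :=
  mkV (vy a * vz b - vz a * vy b) (vz a * vx b - vx a * vz b) (vx a * vy b - vy a * vx b).

(* 3x3 real matrices, entries indexed by 0,1,2 *)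
Definition mat3 := nat -> nat -> R.
Definition row (A : mat3) (i : nat) (v : vec3) : R :=
  A i 0%nat * vx v + A i 1%nat * vy v + A i 2%nat * vz v.
Definition mvmul (A : mat3) (v : vec3) : vec3 := mkV (row A 0 v) (row A 1 v) (row A 2 v).
Definition symmetric3 (A : mat3) : Prop :=
  forall i j : nat, (i < 3)%nat -> (j < 3)%nat -> A i j = A j i.
Definition negdef3 (A : mat3) : Prop :=
  forall v : vec3, v <> vzero -> vdot v (mvmul A v) < 0.

Record quat := mkQ { qs : R; qv : vec3 }.
Definition qnorm (q : quat) : R := sqrt (qs q ^ 2 + vdot (qv q) (qv q)).
Definition unit_quat (q : quat) : Prop := qnorm q = 1.
Definition qconj (q : quat) : quat := mkQ (qs q) (vopp (qv q)).
Definition qmul (p q : quat) : quat :=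
  mkQ (qs p * qs q - vdot (qv p) (qv q))
      (vadd (vadd (vscale (qs p) (qv q)) (vscale (qs q) (qv p))) (vcross (qv p) (qv q))).
Definition qlog (q : quat) : vec3 :=
  if Rlt_dec 0 (vnorm (qv q)) then vscale (acos (qs q) / vnorm (qv q)) (qv q) else vzero.
Definition qpure (w : vec3) : quat := mkQ 0 w.

Definition kq (q qstar : quat) : R :=
  vnorm (qv (qmul q (qconj qstar))) / acos (qs (qmul q (qconj qstar))).

Definition omega_field (A : mat3) (qstar q : quat) : vec3 :=
  mvmul A (vscale (kq q qstar) (qlog (qmul q (qconj qstar)))).

Definition quat_is_derive (q : R -> quat) (t : R) (dq : quat) : Prop :=
  is_derive (fun s => qs (q s)) t (qs dq) /\
  is_derive (fun s => vx (qv (q s))) t (vx (qv dq)) /\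
  is_derive (fun s => vy (qv (q s))) t (vy (qv dq)) /\
  is_derive (fun s => vz (qv (q s))) t (vz (qv dq)).

(* Write q ⊗ conj q* = [s, u].  The gain k_q cancels the normalisation of the
   logarithm, so ω = A u, and the propagation equation gives s' = -(1/2) uᵀ A u.
   Since A is negative definite, k |u|² <= -uᵀ A u <= K |u|² for constants
   k > 0 and K, and |u|² = 1 - s², so s' lies between (k/2)(1 - s²) and
   (K/2)(1 - s²).  By Grönwall's inequality either s stays at -1, where u = 0
   and the logarithm vanishes by convention, or s tends to 1 exponentially
   fast; then the norm of the logarithm, which is at most arccos s, tends to 0. *)

From Stdlib Require Import Reals Lra Psatz Lia Classical.
From Coquelicot Require Import Coquelicot.
Open Scope R_scope.

Lemma vdot_ge0 (v : vec3) : 0 <= vdot v v.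
Proof. destruct v as [x y z]; unfold vdot; simpl; nra. Qed.

Lemma vdot_eq0 (v : vec3) : vdot v v = 0 -> v = vzero.
Proof.
  destruct v as [x y z]; unfold vdot, vzero; simpl; intros H.
  f_equal; nra.
Qed.

Lemma vdot_comm (v w : vec3) : vdot v w = vdot w v.
Proof. unfold vdot; ring. Qed.

Lemma vdot_scale_r (c : R) (v w : vec3) : vdot v (vscale c w) = c * vdot v w.
Proof. unfold vdot, vscale; simpl; ring. Qed.

Lemma vnorm_vzero : vnorm vzero = 0.
Proof.
  unfold vnorm, vdot, vzero; simpl.
  replace (0 * 0 + 0 * 0 + 0 * 0) with 0 by ring; exact sqrt_0.
Qed.

Lemma vnorm_scale (c : R) (v : vec3) : vnorm (vscale c v) = Rabs c * vnorm v.
Proof.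
  unfold vnorm; rewrite <- sqrt_Rsqr_abs, <- sqrt_mult_alt by apply Rle_0_sqr.
  f_equal; unfold vdot, vscale, Rsqr; simpl; ring.
Qed.

Lemma vnorm_opp (v : vec3) : vnorm (vopp v) = vnorm v.
Proof. unfold vnorm; f_equal; unfold vdot, vopp; simpl; ring. Qed.

Lemma vnorm_pos_vdot (v : vec3) : 0 < vnorm v -> 0 < vdot v v.
Proof.
  intros H; apply Rnot_le_lt; intros Hle.
  unfold vnorm in H; rewrite sqrt_neg_0 in H by exact Hle; lra.
Qed.

Lemma vnorm_not_pos (v : vec3) : ~ 0 < vnorm v -> v = vzero.
Proof.
  intros H; apply vdot_eq0, sqrt_eq_0; [apply vdot_ge0 |].
  pose proof (sqrt_pos (vdot v v)); unfold vnorm in H; lra.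
Qed.

Definition mat3_abs_sum (M : mat3) : R :=
  Rabs (M 0 0)%nat + Rabs (M 0 1)%nat + Rabs (M 0 2)%nat +
  Rabs (M 1 0)%nat + Rabs (M 1 1)%nat + Rabs (M 1 2)%nat +
  Rabs (M 2 0)%nat + Rabs (M 2 1)%nat + Rabs (M 2 2)%nat.

Lemma mat3_abs_sum_ge0 (M : mat3) : 0 <= mat3_abs_sum M.
Proof. unfold mat3_abs_sum; repeat apply Rplus_le_le_0_compat; apply Rabs_pos. Qed.

Lemma Rabs_mul_le_sq_bound (c a b n : R) :
  a * a <= n -> b * b <= n -> Rabs (c * a * b) <= Rabs c * n.
Proof.
  intros Ha Hb.
  assert (Hab : Rabs (a * b) <= n) by (apply Rabs_le; split; nra).
  rewrite Rmult_assoc, Rabs_mult.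
  apply Rmult_le_compat_l; [apply Rabs_pos | exact Hab].
Qed.

Lemma vdot_mvmul_abs_le (M : mat3) (v : vec3) :
  Rabs (vdot v (mvmul M v)) <= mat3_abs_sum M * vdot v v.
Proof.
  destruct v as [x y z]; unfold vdot, mvmul, row, mat3_abs_sum; simpl.
  set (n := x * x + y * y + z * z).
  assert (Hx : x * x <= n) by (unfold n; nra).
  assert (Hy : y * y <= n) by (unfold n; nra).
  assert (Hz : z * z <= n) by (unfold n; nra).
  pose proof (Rabs_mul_le_sq_bound (M 0 0)%nat x x n Hx Hx).
  pose proof (Rabs_mul_le_sq_bound (M 0 1)%nat x y n Hx Hy).
  pose proof (Rabs_mul_le_sq_bound (M 0 2)%nat x z n Hx Hz).
  pose proof (Rabs_mul_le_sq_bound (M 1 0)%nat y x n Hy Hx).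
  pose proof (Rabs_mul_le_sq_bound (M 1 1)%nat y y n Hy Hy).
  pose proof (Rabs_mul_le_sq_bound (M 1 2)%nat y z n Hy Hz).
  pose proof (Rabs_mul_le_sq_bound (M 2 0)%nat z x n Hz Hx).
  pose proof (Rabs_mul_le_sq_bound (M 2 1)%nat z y n Hz Hy).
  pose proof (Rabs_mul_le_sq_bound (M 2 2)%nat z z n Hz Hz).
  repeat match goal with H : Rabs _ <= _ |- _ => apply Rabs_le_between in H end.
  apply Rabs_le; split; lra.
Qed.

(* Cyclic form of the cofactor expansion: indices are read modulo 3. *)
Definition adj3 (A : mat3) : mat3 := fun i j =>
  A (S j mod 3)%nat (S i mod 3)%nat * A (S (S j) mod 3)%nat (S (S i) mod 3)%nat
  - A (S j mod 3)%nat (S (S i) mod 3)%nat * A (S (S j) mod 3)%nat (S i mod 3)%nat.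

Definition det3 (A : mat3) : R :=
  A 0%nat 0%nat * adj3 A 0%nat 0%nat + A 0%nat 1%nat * adj3 A 1%nat 0%nat
  + A 0%nat 2%nat * adj3 A 2%nat 0%nat.

Lemma mvmul_adj3 (A : mat3) (v : vec3) :
  mvmul A (mvmul (adj3 A) v) = vscale (det3 A) v.
Proof.
  destruct v as [x y z]; unfold mvmul, row, vscale, det3, adj3; simpl.
  f_equal; ring.
Qed.

Section NegativeDefinite.

Variable A : mat3.
Hypothesis A_sym : symmetric3 A.
Hypothesis A_negdef : negdef3 A.

Lemma vdot_mvmul_lincomb (a b : R) (v w : vec3) :
  let z := vadd (vscale a v) (vscale b w) in
  vdot z (mvmul A z) =
  a ^ 2 * vdot v (mvmul A v) + 2 * a * b * vdot v (mvmul A w) + b ^ 2 * vdot w (mvmul A w).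
Proof.
  destruct v, w; unfold vdot, mvmul, row, vadd, vscale; simpl.
  rewrite (A_sym 1%nat 0%nat), (A_sym 2%nat 0%nat), (A_sym 2%nat 1%nat) by lia; ring.
Qed.

Lemma negdef3_le0 (v : vec3) : vdot v (mvmul A v) <= 0.
Proof.
  destruct (classic (v = vzero)) as [-> | Hv].
  - unfold vdot, mvmul, row, vzero; simpl; lra.
  - exact (Rlt_le _ _ (A_negdef v Hv)).
Qed.

Lemma negdef3_eq0 (v : vec3) : vdot v (mvmul A v) = 0 -> v = vzero.
Proof.
  intros H; apply NNPP; intros Hv.
  pose proof (A_negdef v Hv); lra.
Qed.

Lemma negdef3_cauchy_schwarz (v w : vec3) :
  vdot v (mvmul A w) ^ 2 <= vdot v (mvmul A v) * vdot w (mvmul A w).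
Proof.
  set (a := vdot w (mvmul A w)); set (b := vdot v (mvmul A w)).
  destruct (classic (w = vzero)) as [-> | Hw].
  { replace b with 0 by (unfold b, vdot, mvmul, row, vzero; simpl; ring).
    pose proof (negdef3_le0 v); unfold a, vdot, mvmul, row, vzero; simpl; nra. }
  assert (Ha : a < 0) by exact (A_negdef w Hw).
  pose proof (negdef3_le0 (vadd (vscale a v) (vscale (- b) w))) as Hz.
  rewrite vdot_mvmul_lincomb in Hz; fold a b in Hz.
  assert (Hfactor : a * (a * vdot v (mvmul A v) - b ^ 2) <= 0) by nra.
  nra.
Qed.

Lemma negdef3_det3_neq0 : det3 A <> 0.
Proof.
  intros Hdet.
  assert (Hcol : mvmul (adj3 A) (mkV 0 0 1) = vzero).
  { apply negdef3_eq0.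
    rewrite mvmul_adj3, vdot_scale_r, Hdet; ring. }
  assert (Hminor : A 0%nat 0%nat * A 1%nat 1%nat - A 0%nat 1%nat * A 1%nat 0%nat = 0).
  { apply (f_equal vz) in Hcol; unfold mvmul, row, adj3 in Hcol; simpl in Hcol; lra. }
  set (v := mkV (A 0%nat 1%nat) (- A 0%nat 0%nat) 0).
  assert (Hv : v = vzero).
  { apply negdef3_eq0; unfold v, vdot, mvmul, row; simpl.
    rewrite (A_sym 1%nat 0%nat) in * by lia.
    transitivity (A 0%nat 0%nat * (A 0%nat 0%nat * A 1%nat 1%nat - A 0%nat 1%nat * A 0%nat 1%nat));
      [ring | rewrite Hminor; ring]. }
  assert (Ha00 : A 0%nat 0%nat = 0) by (apply (f_equal vy) in Hv; simpl in Hv; lra).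
  assert (He1 : mkV 1 0 0 <> vzero) by (intros E; injection E; lra).
  pose proof (A_negdef _ He1) as H; unfold vdot, mvmul, row in H; simpl in H; lra.
Qed.

Lemma negdef3_coercive :
  exists k, 0 < k /\ forall v, vdot v (mvmul A v) <= - k * vdot v v.
Proof.
  set (D := det3 A); set (K := mat3_abs_sum (adj3 A)).
  assert (HD : 0 < Rabs D) by (apply Rabs_pos_lt, negdef3_det3_neq0).
  assert (HK : 0 <= K) by apply mat3_abs_sum_ge0.
  exists (Rabs D / (K + 1)); split; [apply Rdiv_lt_0_compat; lra |].
  intros v.
  set (Q := vdot v (mvmul A v)); set (n := vdot v v).
  set (P := vdot v (mvmul (adj3 A) v)).
  assert (HQ : Q <= 0) by apply negdef3_le0.
  assert (Hn : 0 <= n) by apply vdot_ge0.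
  assert (HP : Rabs P <= K * n) by apply vdot_mvmul_abs_le.
  (* Cauchy-Schwarz between [v] and [adj3 A v], which [A] maps to [D v]. *)
  assert (HCS : (D * n) ^ 2 <= Q * (D * P)).
  { pose proof (negdef3_cauchy_schwarz v (mvmul (adj3 A) v)) as H.
    rewrite !mvmul_adj3, !vdot_scale_r, (vdot_comm (mvmul _ _) v) in H; exact H. }
  assert (HDP : Q * (D * P) <= - Q * (Rabs D * (K * n))).
  { pose proof (Rle_abs (- (D * P))) as HDP; rewrite Rabs_Ropp, Rabs_mult in HDP.
    assert (Rabs D * Rabs P <= Rabs D * (K * n)) by (apply Rmult_le_compat_l; lra).
    nra. }
  destruct (Req_dec n 0) as [Hn0 | Hn0].
  { rewrite Hn0; lra. }
  assert (Hkey : Rabs D * n <= - Q * K).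
  { apply (Rmult_le_reg_l (Rabs D * n)); [apply Rmult_lt_0_compat; lra |].
    rewrite Rpow_mult_distr, <- pow2_abs in HCS.
    nra. }
  apply (Rmult_le_reg_l (K + 1)); [lra |].
  field_simplify; [nra | lra].
Qed.

End NegativeDefinite.

Lemma qnorm_mul (p q : quat) : qnorm (qmul p q) = qnorm p * qnorm q.
Proof.
  pose proof (vdot_ge0 (qv p)); pose proof (vdot_ge0 (qv q)).
  unfold qnorm; rewrite <- sqrt_mult by nra; f_equal.
  destruct p as [s1 [a1 b1 c1]], q as [s2 [a2 b2 c2]].
  unfold qmul, vdot, vadd, vscale, vcross; simpl; ring.
Qed.

Lemma qnorm_conj (q : quat) : qnorm (qconj q) = qnorm q.
Proof. unfold qnorm; f_equal; unfold vdot, qconj, vopp; simpl; ring. Qed.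

Lemma unit_quat_mul_conj (p q : quat) :
  unit_quat p -> unit_quat q -> unit_quat (qmul p (qconj q)).
Proof.
  unfold unit_quat; intros Hp Hq; rewrite qnorm_mul, qnorm_conj, Hp, Hq; ring.
Qed.

Lemma unit_quat_sq (q : quat) : unit_quat q -> qs q ^ 2 + vdot (qv q) (qv q) = 1.
Proof.
  unfold unit_quat, qnorm; intros H.
  pose proof (vdot_ge0 (qv q)).
  pose proof (sqrt_sqrt (qs q ^ 2 + vdot (qv q) (qv q))) as E.
  rewrite H in E; nra.
Qed.

Lemma qconj_mul_conj (p q : quat) : qconj (qmul p (qconj q)) = qmul q (qconj p).
Proof.
  destruct p as [s1 [a1 b1 c1]], q as [s2 [a2 b2 c2]].
  unfold qconj, qmul, vdot, vadd, vscale, vcross, vopp; simpl; f_equal; [| f_equal]; ring.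
Qed.

Lemma qs_mul_conj (p q : quat) : qs (qmul p (qconj q)) = qs p * qs q + vdot (qv p) (qv q).
Proof. unfold qmul, qconj, vdot, vopp; simpl; ring. Qed.

Lemma qs_propagation_mul_conj (w : vec3) (p c : quat) :
  qs (qmul (qmul (mkQ (1/2) vzero) (qmul (qpure w) p)) (qconj c))
  = -(1/2) * vdot (qv (qmul p (qconj c))) w.
Proof.
  destruct p as [s1 [a1 b1 c1]], c as [s2 [a2 b2 c2]], w as [x y z].
  unfold qmul, qconj, qpure, vzero, vdot, vadd, vscale, vcross, vopp; simpl; field.
Qed.

Lemma quat_is_derive_qs_mul_conj (q : R -> quat) (c : quat) (t : R) (dq : quat) :
  quat_is_derive q t dq ->
  is_derive (fun r => qs (qmul (q r) (qconj c))) t (qs (qmul dq (qconj c))).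
Proof.
  intros [Hs [Hx [Hy Hz]]].
  eapply is_derive_ext; [intros r; symmetry; apply qs_mul_conj |].
  rewrite qs_mul_conj; unfold vdot.
  apply (is_derive_plus (fun r => qs (q r) * qs c)); [exact (is_derive_scal_l _ t _ _ Hs) |].
  apply (is_derive_plus (fun r => vx (qv (q r)) * vx (qv c) + vy (qv (q r)) * vy (qv c)));
    [apply (is_derive_plus (fun r => vx (qv (q r)) * vx (qv c))) |].
  - exact (is_derive_scal_l _ t _ _ Hx).
  - exact (is_derive_scal_l _ t _ _ Hy).
  - exact (is_derive_scal_l _ t _ _ Hz).
Qed.

Lemma vscale_kq_qlog (p : quat) :
  unit_quat p -> vscale (vnorm (qv p) / acos (qs p)) (qlog p) = qv p.
Proof.
  intros Hp; apply unit_quat_sq in Hp; unfold qlog.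
  destruct (Rlt_dec 0 (vnorm (qv p))) as [Hu | Hu].
  - pose proof (vnorm_pos_vdot _ Hu).
    assert (Hacos : 0 < acos (qs p)) by (apply acos_bound_lt; nra).
    destruct (qv p) as [x y z]; unfold vscale; simpl.
    f_equal; field; lra.
  - rewrite (vnorm_not_pos _ Hu); unfold vscale, vzero; simpl; f_equal; ring.
Qed.

Lemma omega_field_unit (A : mat3) (qstar q : quat) :
  unit_quat (qmul q (qconj qstar)) ->
  omega_field A qstar q = mvmul A (qv (qmul q (qconj qstar))).
Proof. intros H; unfold omega_field, kq; rewrite vscale_kq_qlog by exact H; reflexivity. Qed.

Lemma vnorm_qlog_conj (p : quat) : vnorm (qlog (qconj p)) = vnorm (qlog p).
Proof.
  unfold qlog, qconj; simpl; rewrite vnorm_opp.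
  destruct (Rlt_dec 0 (vnorm (qv p))); [rewrite !vnorm_scale, vnorm_opp |]; reflexivity.
Qed.

Lemma vnorm_qlog_le_acos (p : quat) : vnorm (qlog p) <= acos (qs p).
Proof.
  pose proof (acos_bound (qs p)); unfold qlog.
  destruct (Rlt_dec 0 (vnorm (qv p))) as [Hu | _].
  - rewrite vnorm_scale, Rabs_right by (apply Rle_ge, Rdiv_le_0_compat; lra).
    right; field; lra.
  - rewrite vnorm_vzero; lra.
Qed.

Lemma qlog_vzero (p : quat) : qv p = vzero -> qlog p = vzero.
Proof.
  intros H; unfold qlog; rewrite H, vnorm_vzero.
  destruct (Rlt_dec 0 0); [lra | reflexivity].
Qed.

Lemma unit_quat_qs_bound (p : quat) : unit_quat p -> -1 <= qs p <= 1.
Proof. intros Hp; apply unit_quat_sq in Hp; pose proof (vdot_ge0 (qv p)); nra. Qed.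

Lemma qlog_unit_minus1 (p : quat) : unit_quat p -> qs p = -1 -> qlog p = vzero.
Proof.
  intros Hp Hs; apply unit_quat_sq in Hp; rewrite Hs in Hp.
  apply qlog_vzero, vdot_eq0; lra.
Qed.

Lemma qs_error_is_derive (A : mat3) (qstar : quat) (q : R -> quat) (t : R) :
  unit_quat (qmul (q t) (qconj qstar)) ->
  quat_is_derive q t
    (qmul (mkQ (1/2) vzero) (qmul (qpure (omega_field A qstar (q t))) (q t))) ->
  let u := qv (qmul (q t) (qconj qstar)) in
  is_derive (fun r => qs (qmul (q r) (qconj qstar))) t (-(1/2) * vdot u (mvmul A u)).
Proof.
  intros Hunit Hderiv u.
  pose proof (quat_is_derive_qs_mul_conj q qstar t _ Hderiv) as H.
  rewrite qs_propagation_mul_conj, omega_field_unit in H by exact Hunit.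
  exact H.
Qed.

Lemma unit_quat_form_bounds (A : mat3) (k : R) (p : quat) :
  (forall v, vdot v (mvmul A v) <= - k * vdot v v) -> unit_quat p ->
  k / 2 * (1 - qs p ^ 2) <= -(1/2) * vdot (qv p) (mvmul A (qv p))
  <= mat3_abs_sum A / 2 * (1 - qs p ^ 2).
Proof.
  intros Hcoercive Hp; apply unit_quat_sq in Hp.
  pose proof (Hcoercive (qv p)).
  pose proof (vdot_mvmul_abs_le A (qv p)) as Habs; apply Rabs_le_between in Habs.
  split; nra.
Qed.

Lemma gronwall (f df : R -> R) (c : R) :
  (forall t, 0 <= t -> is_derive f t (df t)) ->
  (forall t, 0 <= t -> df t <= c * f t) ->
  forall t, 0 <= t -> f t <= f 0 * exp (c * t).
Proof.
  intros Hf Hdf t Ht.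
  set (g := fun r => f r * exp (- c * r)).
  set (dg := fun r => df r * exp (- c * r) + f r * (- c * exp (- c * r))).
  assert (Hg : forall r, 0 <= r -> is_derive g r (dg r)).
  { intros r Hr; unfold g, dg.
    apply (is_derive_mult f (fun r => exp (- c * r))); [now apply Hf | | apply Rmult_comm].
    auto_derive; [exact I | ring]. }
  assert (Hgt : g t <= g 0).
  { destruct (Req_dec t 0) as [-> | Ht0]; [lra |].
    destruct (MVT_cor3 g dg 0 t) as [r [Hr0 [Hrt Hmvt]]]; [lra | |].
    - intros r Hr0 Hrt; apply is_derive_Reals, Hg; lra.
    - assert (dg r <= 0).
      { unfold dg; pose proof (Hdf r Hr0); pose proof (exp_pos (- c * r)); nra. }
      nra. }
  unfold g in Hgt; rewrite Rmult_0_r, exp_0, Rmult_1_r in Hgt.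
  replace (f t) with (f t * exp (- c * t) * exp (c * t))
    by (rewrite Rmult_assoc, <- exp_plus; replace (- c * t + c * t) with 0 by ring;
        rewrite exp_0; ring).
  apply Rmult_le_compat_r; [apply Rlt_le, exp_pos | exact Hgt].
Qed.

Lemma is_lim_exp_decay (m : R) : 0 < m -> is_lim (fun t => exp (- m * t)) p_infty 0.
Proof.
  intros Hm.
  apply (is_lim_comp exp (fun t => - m * t) p_infty 0 m_infty).
  - exact is_lim_exp_m.
  - replace m_infty with (Rbar_mult (- m) p_infty)
      by (simpl; case Rle_dec; intros; [exfalso; lra | reflexivity]).
    apply is_lim_scal_l, is_lim_id.
  - exists 0; intros t _; discriminate.
Qed.

Lemma continuous_acos_1 : continuous acos 1.
Proof.
  apply continuity_pt_filterlim.
  intros eps Heps.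
  set (e := Rmin eps (PI / 2)).
  assert (He : 0 < e <= PI / 2)
    by (pose proof PI_RGT_0; split; [apply Rmin_glb_lt | apply Rmin_r]; lra).
  assert (Hcos : 0 <= cos e < 1).
  { split; [apply cos_ge_0; lra |].
    rewrite <- cos_0; apply cos_decreasing_1; lra. }
  exists (1 - cos e); split; [lra |].
  intros y [_ Hy]; simpl in *; unfold R_dist in *.
  rewrite acos_1, Rminus_0_r, Rabs_right by apply Rle_ge, acos_bound.
  apply Rlt_le_trans with e; [| apply Rmin_l].
  destruct (Rle_dec 1 y).
  - unfold acos; destruct (Rle_dec y (-1)); [lra |].
    destruct (Rle_dec 1 y); lra.
  - apply Rabs_def2 in Hy.
    apply Rnot_le_lt; intros Hge.
    assert (cos (acos y) <= cos e)
      by (pose proof (acos_bound y); apply cos_decr_1; lra).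
    rewrite cos_acos in H by lra; lra.
Qed.

Section ScalarFlow.

Variables (s ds : R -> R) (k K : R).
Hypothesis s_deriv : forall t, 0 <= t -> is_derive s t (ds t).
Hypothesis s_range : forall t, 0 <= t -> -1 <= s t <= 1.
Hypothesis ds_lower : forall t, 0 <= t -> k * (1 - s t ^ 2) <= ds t.
Hypothesis ds_upper : forall t, 0 <= t -> ds t <= K * (1 - s t ^ 2).
Hypothesis k_pos : 0 < k.
Hypothesis K_ge0 : 0 <= K.

Lemma scalar_flow_ge_init (t : R) : 0 <= t -> s 0 <= s t.
Proof.
  intros Ht.
  assert (H : - s t <= - s 0 * exp (0 * t)).
  { apply (gronwall (fun r => - s r) (fun r => - ds r)); auto.
    - intros r Hr; apply (is_derive_opp s r (ds r)), s_deriv, Hr.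
    - intros r Hr; pose proof (ds_lower r Hr); pose proof (s_range r Hr).
      assert (0 <= k * (1 - s r ^ 2)) by (apply Rmult_le_pos; nra); lra. }
  rewrite Rmult_0_l, exp_0 in H; lra.
Qed.

Lemma scalar_flow_stays_at_minus1 :
  s 0 = -1 -> forall t, 0 <= t -> s t = -1.
Proof.
  intros Hs0 t Ht.
  assert (H : 1 + s t <= (1 + s 0) * exp (2 * K * t)).
  { apply (gronwall (fun r => 1 + s r) (fun r => 0 + ds r)); auto.
    - intros r Hr.
      exact (is_derive_plus _ _ r _ _ (is_derive_const 1 r) (s_deriv r Hr)).
    - intros r Hr; pose proof (ds_upper r Hr); pose proof (s_range r Hr).
      assert (0 <= K * (1 + s r) * (1 + s r)) by (apply Rmult_le_pos; nra); nra. }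
  rewrite Hs0 in H; pose proof (s_range t Ht); nra.
Qed.

Lemma scalar_flow_exp_bound (t : R) :
  0 <= t -> 1 - s t <= (1 - s 0) * exp (- (k * (1 + s 0)) * t).
Proof.
  intros Ht.
  apply (gronwall (fun r => 1 - s r) (fun r => 0 - ds r)); auto.
  - intros r Hr.
    exact (is_derive_minus _ _ r _ _ (is_derive_const 1 r) (s_deriv r Hr)).
  - intros r Hr; pose proof (ds_lower r Hr); pose proof (s_range r Hr).
    pose proof (scalar_flow_ge_init r Hr).
    assert (0 <= k * (1 - s r) * (s r - s 0)) by (apply Rmult_le_pos; nra); nra.
Qed.

Lemma scalar_flow_cvg_1 : -1 < s 0 -> is_lim s p_infty 1.
Proof.
  intros Hs0.
  set (m := k * (1 + s 0)).
  apply (is_lim_le_le_loc (fun t => 1 - (1 - s 0) * exp (- m * t)) (fun _ => 1)).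
  - exists 0; intros t Ht; split.
    + pose proof (scalar_flow_exp_bound t (Rlt_le _ _ Ht)); unfold m; lra.
    + apply (s_range t); lra.
  - eapply is_lim_minus; [apply is_lim_const | |].
    + apply is_lim_scal_l, is_lim_exp_decay; unfold m; nra.
    + unfold is_Rbar_minus, is_Rbar_plus; simpl; do 2 f_equal; ring.
  - apply is_lim_const.
Qed.

Lemma scalar_flow_dichotomy : (forall t, 0 <= t -> s t = -1) \/ is_lim s p_infty 1.
Proof.
  destruct (Req_dec (s 0) (-1)) as [Hs0 | Hs0].
  - left; exact (scalar_flow_stays_at_minus1 Hs0).
  - right; apply scalar_flow_cvg_1; pose proof (s_range 0 (Rle_refl 0)); lra.
Qed.

End ScalarFlow.

Theorem theorem5 (A : mat3) (qstar : quat) (q : R -> quat) :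
  unit_quat qstar ->
  symmetric3 A ->
  negdef3 A ->
  (forall t, 0 <= t -> unit_quat (q t)) ->
  (forall t, 0 <= t ->
     quat_is_derive q t
       (qmul (mkQ (1/2) vzero) (qmul (qpure (omega_field A qstar (q t))) (q t)))) ->
  is_lim (fun t => vnorm (qlog (qmul qstar (qconj (q t))))) p_infty 0.
Proof.
  intros Hqstar HA_sym HA_neg Hq_unit Hq_deriv.
  set (p := fun t => qmul (q t) (qconj qstar)).
  set (s := fun t => qs (p t)).
  set (ds := fun t => -(1/2) * vdot (qv (p t)) (mvmul A (qv (p t)))).
  assert (Hp_unit : forall t, 0 <= t -> unit_quat (p t))
    by (intros t Ht; apply unit_quat_mul_conj; auto).
  destruct (negdef3_coercive A HA_sym HA_neg) as [k [Hk Hcoercive]].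
  pose proof (mat3_abs_sum_ge0 A).
  destruct (scalar_flow_dichotomy s ds (k / 2) (mat3_abs_sum A / 2)) as [Hstuck | Hcvg].
  - intros t Ht; exact (qs_error_is_derive A qstar q t (Hp_unit t Ht) (Hq_deriv t Ht)).
  - intros t Ht; exact (unit_quat_qs_bound _ (Hp_unit t Ht)).
  - intros t Ht; exact (proj1 (unit_quat_form_bounds A k _ Hcoercive (Hp_unit t Ht))).
  - intros t Ht; exact (proj2 (unit_quat_form_bounds A k _ Hcoercive (Hp_unit t Ht))).
  - lra.
  - lra.
  - apply (is_lim_ext_loc (fun _ => 0)); [exists 0; intros t Ht | apply is_lim_const].
    rewrite <- qconj_mul_conj, vnorm_qlog_conj, qlog_unit_minus1, vnorm_vzero;
      [reflexivity | apply Hp_unit | apply Hstuck]; lra.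
  - apply (is_lim_le_le_loc (fun _ => 0) (fun t => acos (s t))).
    + exists 0; intros t _; rewrite <- qconj_mul_conj, vnorm_qlog_conj.
      split; [apply sqrt_pos | apply vnorm_qlog_le_acos].
    + apply is_lim_const.
    + rewrite <- acos_1; exact (is_lim_comp_continuous _ _ _ _ Hcvg continuous_acos_1).
Qed.
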